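(* Let $T$ be a complete $L$-theory with monster model $\mathcal U$; identify $\phi(a,b)$ with $1$ if it holds and $0$ otherwise. Then $T$ is stable if and only if both of the following hold: (i) for every formula $\phi(x,y)$ and every sequence $(a_i:i<\omega)$ in $\mathcal U$ there are a subsequence $(a_{j_i}:i<\omega)$ and a natural number $N$ such that the sequence $\phi(a_{j_i},y)$ converges pointwise to a function $f$ and $\sum_{i=1}^\infty|\phi(a_{j_i},b)-\phi(a_{j_{i+1}},b)|\le N$ for every $b\in\mathcal U$; (ii) for every formula $\phi(x,y)$ and every sequence $(a_i:i<\omega)$ in $\mathcal U$, if the sequence $\phi(a_i,y)$ converges pointwise to a function $f$ and there is a natural number $N$ with $\sum_{i=1}^\infty|\phi(a_i,b)-\phi(a_{i+1},b)|\le N$ for every $b\in\mathcal U$, then $f$ is continuous.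
   Context: $T$ is stable if no formula $\phi(x,y)$ has the order property, i.e. there are no sequences $(a_i),(b_j)$ in $\mathcal U$ with $\phi(a_i,b_j)\iff i<j$. The functions $\phi(a_i,y)$ are regarded as continuous $\{0,1\}$-valued functions on the Stone space $S_{\tilde\phi}(\{a_i:i<\omega\})$ of complete $\tilde\phi$-types over $\{a_i:i<\omega\}$ (where $\tilde\phi(y,x)=\phi(x,y)$), sending a type $q$ to $1$ iff $\phi(a_i,y)\in q$; convergence and continuity of $f$ refer to this space. *)

From HB Require Import structures.
From mathcomp Require Import all_boot all_order all_algebra.
From mathcomp Require Import all_classical all_reals all_analysis.

Set Implicit Arguments.
Unset Strict Implicit.
Unset Printing Implicit Defensive.

Record signature := Signature {
  fsym : Type;  far : fsym -> nat;
  rsym : Type;  rar : rsym -> nat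
}.

Section FOL.
Variable L : signature.

Inductive term : Type :=
  | t_var : nat -> term
  | t_app : forall f : fsym L, ('I_(far f) -> term) -> term.

(* variable 0 is bound by the innermost quantifier *)
Inductive formula : Type :=
  | f_eq  : term -> term -> formula
  | f_rel : forall r : rsym L, ('I_(rar r) -> term) -> formula
  | f_neg : formula -> formula
  | f_and : formula -> formula -> formula
  | f_ex  : formula -> formula.

Fixpoint term_bound (k : nat) (t : term) : Prop :=
  match t with
  | t_var n => (n < k)%N
  | t_app f ts => forall i, term_bound k (ts i)
  end.

Fixpoint fbound (k : nat) (phi : formula) : Prop :=
  match phi with
  | f_eq t1 t2 => term_bound k t1 /\ term_bound k t2
  | f_rel r ts => forall i, term_bound k (ts i)
  | f_neg p => fbound k p
  | f_and p q => fbound k p /\ fbound k q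
  | f_ex p => fbound k.+1 p
  end.

Definition sentence (phi : formula) : Prop := fbound 0 phi.

Record structure := Structure {
  carrier :> Type;
  s_inh : carrier;
  s_fun : forall f : fsym L, ('I_(far f) -> carrier) -> carrier;
  s_rel : forall r : rsym L, ('I_(rar r) -> carrier) -> Prop
}.

Definition scons (M : Type) (a : M) (e : nat -> M) : nat -> M :=
  fun n => match n with 0 => a | n'.+1 => e n' end.

Fixpoint eval (M : structure) (e : nat -> M) (t : term) : M :=
  match t with
  | t_var n => e n
  | t_app f ts => @s_fun M f (fun i => eval e (ts i))
  end.

Fixpoint sat (M : structure) (e : nat -> M) (phi : formula) : Prop :=
  match phi with
  | f_eq t1 t2 => eval e t1 = eval e t2
  | f_rel r ts => @s_rel M r (fun i => eval e (ts i))
  | f_neg p => ~ sat e p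
  | f_and p q => sat e p /\ sat e q
  | f_ex p => exists a : M, sat (scons a e) p
  end.

(* truth of a sentence (the environment is irrelevant for sentences) *)
Definition models_sentence (M : structure) (sigma : formula) : Prop :=
  sat (fun _ => s_inh M) sigma.

Definition theory := formula -> Prop.

Definition is_model (M : structure) (T : theory) : Prop :=
  forall sigma, T sigma -> models_sentence M sigma.

Definition complete_theory (T : theory) : Prop :=
  (forall sigma, T sigma -> sentence sigma) /\
  (exists M : structure, is_model M T) /\
  (forall sigma, sentence sigma ->
     (forall M : structure, is_model M T -> models_sentence M sigma) \/
     (forall M : structure, is_model M T -> models_sentence M (f_neg sigma))).

(* Environment for a tuple y of length m followed by a sequence c of
   parameters: variable k < m is y_k, variable m + l is c l. *)
Definition env_par (M : Type) (m : nat) (y : 'I_m -> M) (c : nat -> M)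
  : nat -> M :=
  fun k => match ltnP k m with
           | LtnNotGeq h => y (Ordinal h)
           | _ => c (k - m)%N
           end.

Fixpoint In_seq (A : Type) (x : A) (s : seq A) : Prop :=
  match s with [::] => False | y :: s' => y = x \/ In_seq x s' end.

(* aleph_1-saturation: every set of formulas in m free variables with
   parameters from a countable set (enumerated by c) which is finitely
   satisfiable in M is realized in M. *)
Definition aleph1_saturated (M : structure) : Prop :=
  forall (m : nat) (c : nat -> M) (P : formula -> Prop),
    (forall s : seq formula, (forall psi, In_seq psi s -> P psi) ->
       exists y : 'I_m -> M, forall psi, In_seq psi s -> sat (env_par y c) psi) ->
    exists y : 'I_m -> M, forall psi, P psi -> sat (env_par y c) psi.

(* A formula phi(x,y) with x an n-tuple and y an m-tuple of variables:
   x_i is variable i, y_j is variable n + j. *)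
Definition env2 (M : structure) (n m : nat) (a : 'I_n -> M) (b : 'I_m -> M)
  : nat -> M :=
  fun k => match ltnP k n with
           | LtnNotGeq h => a (Ordinal h)
           | _ => match ltnP (k - n) m with
                  | LtnNotGeq h' => b (Ordinal h')
                  | _ => s_inh M
                  end
           end.

Definition holds (M : structure) (n m : nat) (phi : formula)
  (a : 'I_n -> M) (b : 'I_m -> M) : Prop := sat (env2 a b) phi.

Definition tv (M : structure) (n m : nat) (phi : formula)
  (a : 'I_n -> M) (b : 'I_m -> M) : nat :=
  if `[< holds phi a b >] then 1%N else 0%N.

(* Order property in M; T is stable iff no formula has it (in the
   monster model M). *)
Definition order_property (M : structure) (n m : nat) (phi : formula) : Prop :=
  exists (a : nat -> 'I_n -> M) (b : nat -> 'I_m -> M),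
    forall i j, holds phi (a i) (b j) <-> (i < j)%N.

Definition stable_in (M : structure) : Prop :=
  forall (n m : nat) (phi : formula), fbound (n + m) phi ->
    ~ order_property M n m phi.

(* The Stone space S_{phi~}({a_i : i < omega}) of complete phi~-types
   over {a_i}: a type q is identified with its characteristic sequence
   (q i = true iff phi(a_i,y) \in q); it is a subspace of the Cantor
   space {ptws nat -> bool} (product topology, bool discrete), and q is a complete type iff it
   is finitely satisfiable in M. *)
Definition phi_types (M : structure) (n m : nat) (phi : formula)
  (a : nat -> 'I_n -> M) : set {ptws nat -> bool} :=
  [set q | forall k : nat, exists b : 'I_m -> M,
             forall i, (i < k)%N -> (holds phi (a i) b <-> q i)].

End FOL.

From Pilot Require Import Defs.
From mathcomp Require Import all_boot all_order all_algebra.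
From mathcomp Require Import all_classical all_reals all_analysis.
From mathcomp Require Import zify.
Local Open Scope classical_set_scope.
Set Implicit Arguments.
Unset Strict Implicit.
Unset Printing Implicit Defensive.

(* If phi is stable, finite half graphs phi(a_i, b_j) <-> i < j are bounded
   in size, since by aleph_1-saturation arbitrarily large ones yield the
   order property.  Colour the increasing 2k-tuples of indices by whether
   some b realises the alternating pattern 0, 1, 0, 1, ... along them; by
   Ramsey's theorem some subsequence is homogeneous, and the colour "yes"
   would produce a half graph of size k.  Hence along that subsequence every
   phi(-, b), and therefore every type, changes value fewer than 2k times
   and converges.  If a pointwise limit f of the types were discontinuous at
   q, types agreeing with q on ever longer initial segments but with the
   opposite limit would form a staircase realising half graphs of every
   size.  Conversely, if (a_i, b_j) witness the order property, the types
   "i < K" converge to the type "always true" while their limits are all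
   false, so the limit map along any subsequence of bounded variation is
   discontinuous. *)

(** * Renaming and iterated quantifiers *)

Section Syntax.
Variable L : signature.

Fixpoint ren_term (s : nat -> nat) (t : term L) : term L :=
  match t with
  | t_var n => t_var L (s n)
  | t_app f ts => t_app (fun i => ren_term s (ts i))
  end.

Definition up_ren (s : nat -> nat) : nat -> nat :=
  fun v => if v is v'.+1 then (s v').+1 else 0.

Fixpoint ren (s : nat -> nat) (p : formula L) : formula L :=
  match p with
  | f_eq t1 t2 => f_eq (ren_term s t1) (ren_term s t2)
  | f_rel r ts => f_rel (fun i => ren_term s (ts i))
  | f_neg q => f_neg (ren s q)
  | f_and q1 q2 => f_and (ren s q1) (ren s q2)
  | f_ex q => f_ex (ren (up_ren s) q)
  end.

Definition f_true : formula L := f_eq (t_var L 0) (t_var L 0).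

Fixpoint f_bigand (F : nat -> formula L) (k : nat) : formula L :=
  if k is k'.+1 then f_and (F k') (f_bigand F k') else f_true.

Variable M : structure L.
Implicit Types (e : nat -> M) (s : nat -> nat).

Lemma eval_ren s e t : Defs.eval e (ren_term s t) = Defs.eval (fun v => e (s v)) t.
Proof. by elim: t => //= f ts IH; congr s_fun; apply: funext => i. Qed.

Lemma sat_ren (p : formula L) s e : sat e (ren s p) <-> sat (fun v => e (s v)) p.
Proof.
elim: p s e => [t1 t2|r ts|q IH|q1 IH1 q2 IH2|q IH] s e /=.
- by rewrite !eval_ren.
- by under eq_fun do rewrite eval_ren.
- by rewrite IH.
- by rewrite IH1 IH2.
- have scons_up a : (fun v => scons a e (up_ren s v)) = scons a (fun v => e (s v)).
    by apply: funext => -[].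
  by split=> -[a Ha]; exists a; move: Ha; rewrite IH scons_up.
Qed.

Lemma eval_ext_bound k e e' t : term_bound k t ->
  (forall v, v < k -> e v = e' v) -> Defs.eval e t = Defs.eval e' t.
Proof.
move=> + ee'; elim: t => [v|f ts IH] /=; first exact: ee'.
by move=> tb; congr s_fun; apply: funext => i; apply: IH.
Qed.

Lemma sat_ext_bound (p : formula L) k e e' : fbound k p ->
  (forall v, v < k -> e v = e' v) -> (sat e p <-> sat e' p).
Proof.
elim: p k e e' => [t1 t2|r ts|q IH|q1 IH1 q2 IH2|q IH] k e e' /= pb ee'.
- by case: pb => b1 b2; rewrite (eval_ext_bound b1 ee') (eval_ext_bound b2 ee').
- by under eq_fun do rewrite (eval_ext_bound (pb _) ee').
- by rewrite (IH k e e').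
- by case: pb => b1 b2; rewrite (IH1 k e e') // (IH2 k e e').
- have ee'a a v : v < k.+1 -> scons a e v = scons a e' v by case: v => //= v /ee'.
  by split=> -[a Ha]; exists a; move: Ha; rewrite (IH k.+1 _ _ pb (ee'a a)).
Qed.

Lemma sat_bigand F k e : sat e (f_bigand F k) <-> (forall i, i < k -> sat e (F i)).
Proof.
elim: k => [|k IH] /=; first by split.
rewrite IH; split=> [[Fk Flt] i|Fall]; last by split=> [|i ik]; apply: Fall; lia.
by rewrite ltnS leq_eqVlt => /predU1P[->|]; [|apply: Flt].
Qed.

(* The environment seen under [N] existential quantifiers with witnesses [w]. *)
Definition prepend N (w e : nat -> M) : nat -> M :=
  fun v => if v < N then w v else e (v - N).

Lemma prepend_eq N w w' e : (forall v, v < N -> w v = w' v) ->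
  prepend N w e = prepend N w' e.
Proof.
by move=> ww'; apply: funext => v; rewrite /prepend; case: ifP => // /ww'.
Qed.

Lemma prepend_scons N w a e :
  prepend N w (scons a e) = prepend N.+1 (fun v => if v < N then w v else a) e.
Proof.
apply: funext => v; rewrite /prepend ltnS.
case: ltngtP => [//|ltNv|->]; last by rewrite subnn.
by rewrite -subnSK.
Qed.

Lemma sat_iter_ex N p e :
  sat e (iter N (@f_ex L) p) <-> exists w, sat (prepend N w e) p.
Proof.
elim: N e => [|N IH] e /=.
  have prepend0 w : prepend 0 w e = e by apply: funext => v; rewrite /prepend subn0.
  by split=> [pe|[w]]; [exists e|]; rewrite prepend0.
split=> [[a /IH[w Hw]]|[w Hw]].
  by exists (fun v => if v < N then w v else a); rewrite -prepend_scons.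
exists (w N); apply/IH; exists w; rewrite prepend_scons (prepend_eq _ (w' := w)) //.
by move=> v; rewrite ltnS leq_eqVlt => /predU1P[->|->]; rewrite ?ltnn.
Qed.

End Syntax.

(** * Half graphs and compactness *)

Definition half_graph (L : signature) (M : structure L) n m (phi : formula L) k :=
  exists (A : nat -> 'I_n -> M) (B : nat -> 'I_m -> M),
    forall i j, i < k -> j < k -> (holds phi (A i) (B j) <-> i < j).

Definition rev_half_graph (L : signature) (M : structure L) n m (phi : formula L) k :=
  exists (A : nat -> 'I_n -> M) (B : nat -> 'I_m -> M),
    forall i j, i < k -> j < k -> (holds phi (A i) (B j) <-> j <= i).

Lemma divn_modn_block i p d : p < d -> (i * d + p) %/ d = i /\ (i * d + p) %% d = p.
Proof.
by move=> lt_pd; rewrite divnMDl ?modnMDl ?divn_small ?modn_small ?addn0 //; lia.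
Qed.

Section HalfGraphFormula.
Variables (L : signature) (M : structure L) (n m : nat) (phi : formula L).
Hypothesis phi_bound : fbound (n + m) phi.

(* The variables of the half-graph formula come in blocks of width
   [n + m + 1] (positive even when [n = m = 0]): block [i] holds [a_i]
   followed by [b_i]. *)
Local Notation w := (n + m + 1).

Definition block_a (e : nat -> M) i : 'I_n -> M := fun p => e (i * w + p).
Definition block_b (e : nat -> M) j : 'I_m -> M := fun q => e (j * w + n + q).

Definition pair_ren i j : nat -> nat :=
  fun v => if v < n then i * w + v else j * w + v.

Definition half_graph_formula k : formula L :=
  f_bigand (fun i => f_bigand (fun j =>
    if i < j then ren (pair_ren i j) phi else f_neg (ren (pair_ren i j) phi)) k) k.

Lemma sat_pair_ren (e : nat -> M) i j :
  sat e (ren (pair_ren i j) phi) <-> holds phi (block_a e i) (block_b e j).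
Proof.
rewrite sat_ren; apply: (sat_ext_bound phi_bound) => v lt_v_nm.
rewrite /env2 /pair_ren; case: ltnP => // le_n_v.
by case: ltnP => [lt_vn_m|]; [rewrite /block_b /=; congr e|]; lia.
Qed.

Lemma sat_half_graph_formula (e : nat -> M) k :
  sat e (half_graph_formula k) <->
  forall i j, i < k -> j < k -> (holds phi (block_a e i) (block_b e j) <-> i < j).
Proof.
rewrite sat_bigand; split=> [hg i j ik jk|hg i ik].
  move: (hg i ik); rewrite sat_bigand => /(_ j jk).
  by case: ifP => _ /=; rewrite sat_pair_ren; split.
rewrite sat_bigand => j jk; move: (hg i j ik jk).
by case: ifP => _ /=; rewrite sat_pair_ren => ->.
Qed.

Lemma sat_half_graph_formula_le (e : nat -> M) k K : k <= K ->
  sat e (half_graph_formula K) -> sat e (half_graph_formula k).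
Proof. by move=> kK; rewrite !sat_half_graph_formula => hg i j ik jk; apply: hg; lia. Qed.

Lemma sat_half_graph_formula_ext (e e' : nat -> M) k :
  (forall p, p < k * w -> e p = e' p) ->
  sat e (half_graph_formula k) -> sat e' (half_graph_formula k).
Proof.
move=> ee'; have blocks i : i < k -> block_a e i = block_a e' i /\ block_b e i = block_b e' i.
  by move=> ik; split; apply: funext => p; apply: ee'; have := ltn_ord p; nia.
rewrite !sat_half_graph_formula => hg i j ik jk.
by have [<- _] := blocks i ik; have [_ <-] := blocks j jk; apply: hg.
Qed.

Definition block_env (A : nat -> 'I_n -> M) (B : nat -> 'I_m -> M) : nat -> M :=
  fun p => match ltnP (p %% w) n with
           | LtnNotGeq h => A (p %/ w) (Ordinal h)
           | _ => match ltnP (p %% w - n) m with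
                  | LtnNotGeq h' => B (p %/ w) (Ordinal h')
                  | _ => s_inh M
                  end
           end.

Lemma block_a_env A B i : block_a (block_env A B) i = A i.
Proof.
apply: funext => p; have lt_pn := ltn_ord p; have lt_pw : p < w by lia.
rewrite /block_a /block_env; have [-> ->] := divn_modn_block i lt_pw.
by case: ltnP => [lt_pn'|]; [congr A; apply: val_inj|lia].
Qed.

Lemma block_b_env A B j : block_b (block_env A B) j = B j.
Proof.
apply: funext => q; have lt_qm := ltn_ord q; have lt_nqw : n + q < w by lia.
rewrite /block_b /block_env -addnA; have [-> ->] := divn_modn_block j lt_nqw.
rewrite addKn; case: ltnP => [|_]; first lia.
by case: ltnP => [lt_qm'|]; [congr B; apply: val_inj|lia].
Qed.

Lemma half_graph_formula_sat k : half_graph M n m phi k ->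
  exists e : nat -> M, sat e (half_graph_formula k).
Proof.
case=> A [B hg]; exists (block_env A B); rewrite sat_half_graph_formula.
by move=> i j; rewrite block_a_env block_b_env; apply: hg.
Qed.

End HalfGraphFormula.

Arguments block_a {L M} n m e i.
Arguments block_b {L M} n m e j.

Lemma env_par0 (M : Type) (y : 'I_1 -> M) c : env_par y c 0 = y ord0.
Proof. by rewrite /env_par; case: ltnP => // lt01; congr y; apply: val_inj. Qed.

Lemma env_parS (M : Type) (y : 'I_1 -> M) c v : env_par y c v.+1 = c v.
Proof. by rewrite /env_par; case: ltnP => // _; rewrite subn1. Qed.

Lemma In_seq_bounded (A : Type) (P : nat -> A) (l : seq A) :
  (forall x, In_seq x l -> exists k, x = P k) ->
  exists K, forall x, In_seq x l -> exists2 k, k <= K & x = P k.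
Proof.
elim: l => [|x l IH] lP; first by exists 0.
have [K HK] := IH (fun y ly => lP y (or_intror ly)).
have [k0 ->] := lP x (or_introl erefl).
exists (maxn K k0) => _ [<-|/HK[k kK ->]]; [exists k0|exists k] => //; lia.
Qed.

Fixpoint extend_env (T : Type) (d : T) (g : nat * (nat -> T) -> T) t : nat -> T :=
  if t is t'.+1 then
    fun p => if p == t' then g (t', extend_env d g t') else extend_env d g t' p
  else fun=> d.

Lemma extend_env_stable (T : Type) (d : T) g t p :
  p < t -> extend_env d g t p = extend_env d g p.+1 p.
Proof.
elim: t => [//|t IH] lt_pt /=; case: eqP => [->|ne]; first by rewrite eqxx.
by rewrite IH //; lia.
Qed.

Section Compactness.
Variables (L : signature) (M : structure L) (n m : nat) (phi : formula L).
Hypothesis phi_bound : fbound (n + m) phi.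
Hypothesis M_sat : aleph1_saturated M.

Local Notation w := (n + m + 1).
Local Notation hgf := (half_graph_formula n m phi).

(* Saturation only realises types in finitely many variables, so an infinite
   half graph is built one variable of [hgf] at a time, keeping every finite
   prefix extendable to half graphs of all sizes. *)
Definition extendable s (e : nat -> M) :=
  forall k, exists e' : nat -> M, (forall p, p < s -> e' p = e p) /\ sat e' (hgf k).

(* Variables [0, ..., s - 1] of [hgf k] become the parameters, variable [s]
   the free variable, and the remaining [k * w] variables are quantified. *)
Definition shift_ren s N : nat -> nat :=
  fun p => if p < s then N + p.+1 else if p == s then N else p - s.+1.

Definition extension_formula s k : formula L :=
  iter (k * w) (@f_ex L) (ren (shift_ren s (k * w)) (hgf k)).

Lemma prepend_env_par_shift (y : 'I_1 -> M) c u s N p : p < s + N.+1 ->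
  prepend N u (env_par y c) (shift_ren s N p) =
  if p < s then c p else if p == s then y ord0 else u (p - s.+1).
Proof.
rewrite /shift_ren /prepend => lt_p; case: (ltngtP p s) => [_|lt_sp|_].
- by case: ifP => [|_]; [lia|rewrite addKn env_parS].
- by case: ifP => //; lia.
- by rewrite ltnn subnn env_par0.
Qed.

Lemma extendable_step s e :
  extendable s e -> exists x, extendable s.+1 (fun p => if p == s then x else e p).
Proof.
move=> ext; pose P psi := exists k, psi = extension_formula s k.
have [y Hy] : exists y : 'I_1 -> M, forall psi, P psi -> sat (env_par y e) psi.
  apply: M_sat => l lP; have [K HK] := In_seq_bounded lP.
  have [e' [e'e hgK]] := ext K.
  exists (fun=> e' s) => _ /HK[k kK ->].
  rewrite /extension_formula sat_iter_ex; exists (fun v => e' (v + s.+1)).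
  have hgk := sat_half_graph_formula_le phi_bound kK hgK.
  rewrite sat_ren; apply: (sat_half_graph_formula_ext phi_bound _ hgk).
  move=> p lt_p /=; rewrite prepend_env_par_shift; last lia.
  case: ltnP => [/e'e //|le_sp]; case: eqP => [->//|ne_ps].
  by congr e'; lia.
exists (y ord0) => k.
have /sat_iter_ex[u hg] := Hy _ (ex_intro _ k erefl).
rewrite sat_ren in hg; eexists; split; last exact: hg.
move=> p lt_p /=; rewrite prepend_env_par_shift; last lia.
case: ltnP => [lt_ps|le_sp]; first by rewrite (ltn_eqF lt_ps).
have -> : p = s by lia.
by rewrite eqxx.
Qed.

Theorem order_property_of_half_graphs :
  (forall k, half_graph M n m phi k) -> order_property M n m phi.
Proof.
move=> hg.
have step (se : nat * (nat -> M)) : exists x,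
    extendable se.1 se.2 -> extendable se.1.+1 (fun p => if p == se.1 then x else se.2 p).
  case: se => s e /=; have [/extendable_step[x ext]|not_ext] := pselect (extendable s e).
    by exists x.
  by exists (s_inh M) => /not_ext.
have [g Hg] := choice step.
pose E := extend_env (s_inh M) g.
have extE t : extendable t (E t).
  elim: t => [k|t IH]; last exact: Hg (t, E t) IH.
  by have [e he] := half_graph_formula_sat phi_bound (hg k); exists e.
pose e p := E p.+1 p.
exists (block_a n m e), (block_b n m e) => i j.
have [e' [e'E hgk]] := extE ((i + j).+1 * w) (i + j).+1.
have : sat e (hgf (i + j).+1).
  apply: (sat_half_graph_formula_ext phi_bound _ hgk) => p lt_p.
  by rewrite e'E // /e /E extend_env_stable.
by rewrite sat_half_graph_formula // => /(_ i j); apply; lia.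
Qed.

End Compactness.

(** * Ramsey's theorem *)

Lemma incr_ltn_mono (j : nat -> nat) : (forall i, j i < j i.+1) -> {mono j : i k / i < k}.
Proof. by move=> j_incr; apply/leqW_mono/leq_mono/(homo_ltn ltn_trans j_incr). Qed.

Lemma incr_leq_mono (j : nat -> nat) : (forall i, j i < j i.+1) -> {mono j : i k / i <= k}.
Proof. by move=> j_incr; apply/leq_mono/(homo_ltn ltn_trans j_incr). Qed.

Lemma incr_geq (j : nat -> nat) : (forall i, j i < j i.+1) -> forall i, i <= j i.
Proof. by move=> j_incr; elim=> // i IH; apply: leq_ltn_trans IH (j_incr i). Qed.

Definition unbounded (S : set nat) := forall N, exists2 x, N <= x & S x.

Lemma unbounded_enum (H : set nat) : unbounded H ->
  exists j : nat -> nat, (forall i, j i < j i.+1) /\ forall i, H (j i).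
Proof.
move=> unbH; have /choice[nx Hnx] : forall N, exists x, N <= x /\ H x.
  by move=> N; have [x] := unbH N; exists x.
pose j := fix j i := if i is i'.+1 then nx (j i').+1 else nx 0.
exists j; split=> [i|[|i]] /=; [exact: (Hnx (j i).+1).1 | exact: (Hnx 0).2 | exact: (Hnx _).2].
Qed.

Definition homogeneous r (c : seq nat -> bool) (H : set nat) (col : bool) :=
  forall s, size s = r -> sorted ltn s -> (forall y, y \in s -> H y) -> c s = col.

Definition ramsey_property r := forall (c : seq nat -> bool) (S : set nat), unbounded S ->
  exists H, [/\ unbounded H, H `<=` S & exists col, homogeneous r c H col].

Lemma unbounded_bool_fiber (col : nat -> bool) : exists b, unbounded [set t | col t = b].
Proof.
have [unb_true|] := pselect (unbounded [set t | col t = true]); first by exists true.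
move=> not_unb; exists false => N; apply: contrapT => no_false; apply: not_unb => N'.
exists (maxn N N'); first exact: leq_maxr.
rewrite /=; case E: (col _) => //; exfalso; apply: no_false.
by exists (maxn N N'); rewrite ?leq_maxl.
Qed.

Lemma ramsey_step r c S : ramsey_property r -> unbounded S ->
  exists (x : nat) (col : bool) (H : set nat),
    [/\ S x, unbounded H, H `<=` [set y | S y /\ x < y] & homogeneous r (c \o cons x) H col].
Proof.
move=> IH unbS; have [x _ Sx] := unbS 0.
have unbS' : unbounded [set y | S y /\ x < y].
  move=> N; have [y le_y Sy] := unbS (maxn N x.+1).
  by exists y; [|split=> //]; lia.
by have [H [unbH HS [col hom]]] := IH (c \o cons x) _ unbS'; exists x, col, H.
Qed.

Theorem ramsey r : ramsey_property r.
Proof.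
elim: r => [|r IH] c S unbS.
  by exists S; split=> //; exists (c [::]) => s /size0nil ->.
have step S' : exists t : nat * bool * set nat, unbounded S' ->
    [/\ S' t.1.1, unbounded t.2, t.2 `<=` [set y | S' y /\ t.1.1 < y]
      & homogeneous r (c \o cons t.1.1) t.2 t.1.2].
  have [/(ramsey_step c IH)[x [col [H hP]]]|not_unb] := pselect (unbounded S').
    by exists (x, col, H).
  by exists (0, true, S') => /not_unb.
have [F HF] := choice step.
pose Sq := fix Sq t := if t is t'.+1 then (F (Sq t')).2 else S.
pose x t := (F (Sq t)).1.1.
pose col t := (F (Sq t)).1.2.
have unbSq t : unbounded (Sq t) by elim: t => [//|t /HF[]].
have [Sq_x SqS hom] : [/\ forall t, Sq t (x t),
    forall t y, Sq t.+1 y -> Sq t y /\ x t < y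
  & forall t, homogeneous r (c \o cons (x t)) (Sq t.+1) (col t)].
  by split=> t; have [] := HF _ (unbSq t).
have x_incr t : x t < x t.+1 by have [] := SqS _ _ (Sq_x t.+1).
have Sq_decr t t' : t <= t' -> Sq t' `<=` Sq t.
  by move/subnK <-; elim: (t' - t) => [//|d IHd] y /SqS[/IHd].
have [b unb_b] := unbounded_bool_fiber col.
exists (x @` [set t | col t = b]); split.
- move=> N; have [t le_Nt colt] := unb_b N.
  by exists (x t); [apply: leq_trans le_Nt (incr_geq x_incr t)|exists t].
- by move=> _ [t _ <-]; apply: Sq_decr (leq0n t) _ (Sq_x t).
exists b => -[//|y s] [size_s] /= sorted_s s_H.
have [t0 colt0 ext0] := s_H _ (mem_head _ _); subst y.
rewrite -colt0; apply: (hom t0) => //; first exact: path_sorted sorted_s.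
move=> z zs; have lt_x0z := allP (order_path_min ltn_trans sorted_s) z zs.
have [t' _ ext'] : (x @` [set t | col t = b]) z by apply: s_H; rewrite inE zs orbT.
subst z.
rewrite /= incr_ltn_mono // in lt_x0z.
exact: Sq_decr lt_x0z _ (Sq_x t').
Qed.

(** * Changes of a boolean sequence *)

Section Changes.
Variable u : nat -> bool.

Definition nchanges k := \sum_(1 <= i < k) (u i != u i.+1).

Lemma nchangesS k : 0 < k -> nchanges k.+1 = nchanges k + (u k != u k.+1).
Proof. by move=> k_gt0; rewrite /nchanges big_nat_recr. Qed.

Lemma nchanges_homo : {homo nchanges : k k' / k <= k'}.
Proof.
apply: (homo_leq leqnn leq_trans) => -[|k]; first by rewrite /nchanges !big_geq.
by rewrite (nchangesS (k := k.+1)) // leq_addr.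
Qed.

Lemma sum_changes_gt0 K i : K <= i -> u K != u i ->
  0 < \sum_(K <= i' < i) (u i' != u i'.+1).
Proof.
elim: i => [|i IH]; first by rewrite leqn0 => /eqP-> /[!eqxx].
rewrite leq_eqVlt => /predU1P[-> /[!eqxx] //|lt_Ki neq].
rewrite big_nat_recr //= addn_gt0; case: (eqVneq (u K) (u i)) => [eq|/IH->//].
by rewrite -eq neq orbT.
Qed.

Lemma nchanges_chain k : 0 < k ->
  exists p : nat -> nat, p (nchanges k) = k /\
    forall l, l < nchanges k -> p l < p l.+1 /\ u (p l.+1) != u (p l).
Proof.
elim: k => [//|k IH] _; have [->|k_gt0] := posnP k.
  by exists (fun=> 1); rewrite /nchanges big_geq.
have [p [pk p_chain]] := IH k_gt0; rewrite nchangesS //.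
case: (boolP (u k != u k.+1)) => [ch_k|]; rewrite ?addn1 ?addn0.
- exists (fun l => if l == (nchanges k).+1 then k.+1 else p l); rewrite eqxx.
  split=> // l lt_l; rewrite (ltn_eqF lt_l).
  case: (eqVneq l (nchanges k)) => [->|ne]; first by rewrite eqxx pk eq_sym.
  by rewrite eqSS (negbTE ne); apply: p_chain; lia.
- rewrite negbK => /eqP eq_k.
  exists (fun l => if l == nchanges k then k.+1 else p l); rewrite eqxx.
  split=> // l lt_l; rewrite (ltn_eqF lt_l); have [lt_p ch_p] := p_chain l lt_l.
  case: (eqVneq l.+1 (nchanges k)) => [e|_]; last exact: p_chain.
  by move: lt_p ch_p; rewrite e pk -eq_k => lt_p ->; split=> //; lia.
Qed.

Lemma nchanges_alternating k M : 0 < k -> M <= nchanges k ->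
  exists p : nat -> nat, (forall l, l.+1 < M -> p l < p l.+1) /\
    forall l, l < M -> u (p l) = odd l.
Proof.
move=> k_gt0 le_M; have [p [_ p_chain]] := nchanges_chain k_gt0.
pose d := nat_of_bool (u (p 0)); have le_d1 : d <= 1 by rewrite /d; case: (u _).
exists (fun l => p (l + d)); split=> [l lt_l|].
  by have /p_chain[] : l + d < nchanges k by lia.
elim=> [|l IH] lt_l.
  rewrite /d; case E: (u (p 0)) => //=.
  by have [_] := p_chain 0 (leq_trans lt_l le_M); rewrite E; case: (u _).
have /p_chain[_] : l + d < nchanges k by lia.
by rewrite IH 1?ltnW //=; case: (u _); case: (odd l).
Qed.

Lemma eventually_const_of_bounded_nchanges N : (forall k, nchanges k <= N) ->
  exists K, forall i, K <= i -> u i = u K.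
Proof.
move=> bnd; apply: contrapT => not_ev.
suff unb c : exists k, c <= nchanges k by have [k] := unb N.+1; rewrite ltnNge bnd.
elim: c => [|c [k le_ck]]; first by exists 0.
pose K := maxn k 1.
have [i le_Ki neq_i] : exists2 i, K <= i & u K != u i.
  apply: contrapT => none; apply: not_ev; exists K => i le_Ki.
  by apply/eqP; rewrite eq_sym; apply: contrapT => /negP ne; apply: none; exists i.
exists i; have -> : nchanges i = nchanges K + \sum_(K <= i' < i) (u i' != u i'.+1).
  by rewrite /nchanges -big_cat_nat // leq_maxr.
have := sum_changes_gt0 le_Ki neq_i; have := nchanges_homo (leq_maxl k 1); rewrite -/K; lia.
Qed.

End Changes.

Lemma eq_nchanges (u v : nat -> bool) k : (forall i, i <= k -> u i = v i) ->
  nchanges u k = nchanges v k.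
Proof. by move=> uv; apply: eq_big_nat => i /andP[_ ik]; rewrite !uv //; lia. Qed.

(** * Convergence and continuity in the Cantor space *)

Lemma cvg_seq_boolP (v : nat -> bool) b :
  v @ \oo --> b <-> exists K, forall i, K <= i -> v i = b.
Proof.
rewrite discrete_cvg; split=> [[K _ vK]|[K vK]]; first by exists K => i /vK.
by exists K => // i; apply: vK.
Qed.

Lemma nbhs_ptws_prefix (q : {ptws nat -> bool}) K :
  nbhs q [set q' : {ptws nat -> bool} | forall i, i < K -> q' i = q i].
Proof.
have coord t : nbhs q [set q' : {ptws nat -> bool} | q' t = q t].
  by have [/(_ cvg_id t [set q t] (discrete_set1 _)) + _] := pointwise_cvgP q (nbhs_filter q).
elim: K => [|K IH]; first exact: filterS filterT.
apply: filterS (filterI IH (coord K)) => q' [eq_lt eq_K] i.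
by rewrite ltnS leq_eqVlt => /predU1P[->|/eq_lt].
Qed.

Lemma cvg_ptws_seq (g : nat -> {ptws nat -> bool}) (q : {ptws nat -> bool}) :
  (forall t, exists K, forall k, K <= k -> g k t = q t) -> g @ \oo --> q.
Proof.
move=> ev_eq; have [_] := pointwise_cvgP q (fmap_filter g eventually_filter).
by apply=> t; apply/cvg_seq_boolP.
Qed.

Lemma continuous_within_boolP (A : set {ptws nat -> bool}) (f : {ptws nat -> bool} -> bool) :
  {within A, continuous f} <-> forall q, A q -> nbhs q (fun q' => A q' -> f q' = f q).
Proof.
rewrite subspace_continuousP; split=> [fc q Aq|fc q Aq W /nbhs_singleton Wfq].
  exact: fc q Aq [set f q] (discrete_set1 _).
by apply: filterS (fc q Aq) => q' fq' Aq'; rewrite /from_subspace /= fq'.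
Qed.

Definition eventually_true (q : nat -> bool) : bool := `[< exists K, forall i, K <= i -> q i >].

Lemma cvg_eventually_true (q : nat -> bool) N : (forall k, nchanges q k <= N) ->
  q @ \oo --> eventually_true q.
Proof.
move=> /eventually_const_of_bounded_nchanges[K qK]; apply/cvg_seq_boolP; exists K => i le_Ki.
rewrite qK //; case qK_true: (q K); first by apply/esym/asboolP; exists K => i' /qK->.
apply/esym/negbTE/asboolP => -[K' qK'].
by move: (qK' (maxn K K') (leq_maxr _ _)); rewrite qK ?leq_maxl // qK_true.
Qed.

Lemma discontinuity_far_flip (A : set {ptws nat -> bool}) (f : {ptws nat -> bool} -> bool) q :
  (forall q', A q' -> q' @ \oo --> f q') -> ~ nbhs q (fun q' => A q' -> f q' = f q) ->
  forall K, exists q' K', [/\ A q', forall i, i < K -> q' i = q i, K <= K'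
                            & forall i, K' <= i -> q' i = ~~ f q].
Proof.
move=> conv not_loc K.
have [q' [q'q Aq' fq']] : exists q' : {ptws nat -> bool},
    [/\ forall i, i < K -> q' i = q i, A q' & f q' <> f q].
  apply: contrapT => none; apply: not_loc.
  apply: filterS (nbhs_ptws_prefix q K) => q' q'q Aq'.
  by apply: contrapT => fq'; apply: none; exists q'.
have [K' q'K'] := (cvg_seq_boolP _ _).1 (conv q' Aq').
exists q', (maxn K K'); split=> // [|i le_i]; first exact: leq_maxl.
rewrite q'K'; last exact: leq_trans (leq_maxr K K') le_i.
by move: fq'; case: (f q'); case: (f q).
Qed.

Lemma staircase (A : set (nat -> bool)) (q : nat -> bool) v K0 :
  (forall i, K0 <= i -> q i = v) ->
  (forall K, exists q' K', [/\ A q', forall i, i < K -> q' i = q i, K <= K'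
                             & forall i, K' <= i -> q' i = ~~ v]) ->
  exists (I : nat -> nat) (Q : nat -> nat -> bool),
    [/\ forall t, I t < I t.+1, forall s, A (Q s)
      & forall s t, Q s (I t) = if t < s then v else ~~ v].
Proof.
move=> qv far; have /choice[G HG] : forall K, exists qK : (nat -> bool) * nat,
    [/\ A qK.1, forall i, i < K -> qK.1 i = q i, K <= qK.2
       & forall i, qK.2 <= i -> qK.1 i = ~~ v].
  by move=> K; have [q' [K' hK]] := far K; exists (q', K').
pose Kf := fix Kf t := if t is t'.+1 then ((G (Kf t')).2).+1 else K0.
pose I t := (G (Kf t)).2.
have Kf_le_I t : Kf t <= I t by have [] := HG (Kf t).
have Kf_incr t : Kf t < Kf t.+1 by apply: leq_ltn_trans (Kf_le_I t) _.
have I_incr t : I t < I t.+1 by apply: leq_trans (Kf_le_I t.+1).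
exists I, (fun s => (G (Kf s)).1); split=> // [s|s t]; first by have [] := HG (Kf s).
have [_ agree _ flip] := HG (Kf s); case: ltnP => [lt_ts|le_st].
  rewrite agree; last by rewrite -[_ < _]/(Kf t.+1 <= Kf s) incr_leq_mono.
  apply: qv; apply: leq_trans (Kf_le_I t); rewrite -[K0]/(Kf 0) incr_leq_mono //.
by apply: flip; rewrite incr_leq_mono.
Qed.

(** * Types along a sequence of parameters *)

Section Types.
Variables (L : signature) (M : structure L) (n m : nat) (phi : formula L).

Definition holdsb (x : 'I_n -> M) (y : 'I_m -> M) : bool := `[< holds phi x y >].

Lemma tv_distE x x' y : `|tv phi x y - tv phi x' y|%N = (holdsb x y != holdsb x' y).
Proof. by rewrite /tv /holdsb; case: `[< _ >]; case: `[< _ >]. Qed.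

Lemma sum_tv_dist (a : nat -> 'I_n -> M) y k :
  \sum_(1 <= i < k) `|tv phi (a i) y - tv phi (a i.+1) y|%N =
  nchanges (fun i => holdsb (a i) y) k.
Proof. by apply: eq_bigr => i _; rewrite tv_distE. Qed.

Lemma half_graph_of_rev k : rev_half_graph M n m phi k.+1 -> half_graph M n m phi k.
Proof.
case=> A [B hg]; exists (fun i => A (k - 1 - i)), (fun j => B (k - j)) => i j ik jk.
by rewrite hg; try split; lia.
Qed.

Lemma phi_types_prefix (a : nat -> 'I_n -> M) (q : nat -> bool) k :
  phi_types m phi a q -> exists y, forall i, i < k -> q i = holdsb (a i) y.
Proof.
move=> /(_ k)[y qy]; exists y => i ik.
by apply/idP/asboolP => /(qy i ik).
Qed.

Lemma phi_types_subseq (a : nat -> 'I_n -> M) (q : nat -> bool) (j : nat -> nat) :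
  (forall i, j i < j i.+1) ->
  phi_types m phi a q -> phi_types m phi (fun i => a (j i)) (fun i => q (j i)).
Proof.
move=> j_incr aq k; have [y qy] := aq (j k); exists y => i ik.
by apply: qy; rewrite incr_ltn_mono.
Qed.

Lemma nchanges_phi_types (a : nat -> 'I_n -> M) (q : nat -> bool) N :
  (forall y k, nchanges (fun i => holdsb (a i) y) k <= N) ->
  phi_types m phi a q -> forall k, nchanges q k <= N.
Proof.
move=> bnd aq k; have [y qy] := phi_types_prefix k.+1 aq.
by rewrite (@eq_nchanges _ (fun i => holdsb (a i) y)) // => i ik; apply: qy.
Qed.

Lemma cvg_phi_types_eventually_true (a : nat -> 'I_n -> M) N :
  (forall y k, nchanges (fun i => holdsb (a i) y) k <= N) ->
  forall q : {ptws nat -> bool}, phi_types m phi a q -> q @ \oo --> eventually_true q.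
Proof. by move=> bnd q aq; apply: cvg_eventually_true (nchanges_phi_types bnd aq). Qed.

Lemma eventually_true_discontinuous (a : nat -> 'I_n -> M) (b : nat -> 'I_m -> M) :
  (forall i j, holds phi (a i) (b j) <-> i < j) ->
  ~ {within phi_types m phi a, continuous eventually_true}.
Proof.
move=> ab /continuous_within_boolP cont.
pose g K : {ptws nat -> bool} := fun i => i < K.
have ag K : phi_types m phi a (g K) by move=> k; exists (b K) => i _; rewrite ab.
pose all_true : {ptws nat -> bool} := fun=> true.
have aT : phi_types m phi a all_true by move=> k; exists (b k) => i ik; rewrite ab.
have g_cvg : g @ \oo --> all_true.
  by apply: cvg_ptws_seq => t; exists t.+1 => K tK; rewrite /g tK.
have [K _ gK] := g_cvg _ (cont _ aT).
have /gK/(_ (ag K)) : K <= K by [].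
have -> : eventually_true all_true by apply/asboolP; exists 0.
by move=> /asboolP[K' /(_ (maxn K K') (leq_maxr _ _))]; rewrite /g ltnNge leq_maxl.
Qed.

Lemma half_graph_of_alternation (a : nat -> 'I_n -> M) k :
  (forall s, s < k -> exists y, forall l, l < 2 * k ->
     holdsb (a (if l < 2 * s then l else l.+1)) y = odd l) ->
  half_graph M n m phi k.
Proof.
move=> alt; have /choice[B HB] : forall s, exists y, s < k -> forall l, l < 2 * k ->
    holdsb (a (if l < 2 * s then l else l.+1)) y = odd l.
  by move=> s; case: (ltnP s k) => [/alt[y]|_]; [exists y|exists (fun=> s_inh M)].
exists (fun t => a (2 * t).+1), B => t s tk sk.
rewrite (rwP (asboolP (holds phi _ _))) -/(holdsb _ _).
case: (ltnP t s) => [lt_ts|le_st].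
  have -> : holdsb (a (2 * t).+1) (B s) = odd (2 * t).+1.
    by rewrite -(HB s sk (2 * t).+1) ?ifT //; lia.
  by rewrite /= oddM.
have -> : holdsb (a (2 * t).+1) (B s) = odd (2 * t).
  by rewrite -(HB s sk (2 * t)) ?ifF //; lia.
by rewrite oddM.
Qed.

Lemma half_graph_of_staircase (a : nat -> 'I_n -> M) (I : nat -> nat)
    (Q : nat -> nat -> bool) v :
  (forall t, I t < I t.+1) -> (forall s, phi_types m phi a (Q s)) ->
  (forall s t, Q s (I t) = if t < s then v else ~~ v) ->
  forall k, half_graph M n m phi k.
Proof.
move=> I_incr aQ QI k.
have realize K : exists B : nat -> 'I_m -> M,
    forall t s, t < K -> (holds phi (a (I t)) (B s) <-> Q s (I t)).
  have /choice[B HB] s : exists y, forall i, i < I K -> Q s i = holdsb (a i) y.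
    exact: phi_types_prefix.
  by exists B => t s tK; rewrite HB ?incr_ltn_mono //; exact: rwP (asboolP _).
case: v in QI.
  have [B HB] := realize k; exists (fun t => a (I t)), B => t s tk sk.
  by rewrite HB // QI; case: ltnP.
apply: half_graph_of_rev; have [B HB] := realize k.+1; exists (fun t => a (I t)), B.
by move=> t s tk sk; rewrite HB // QI; case: ltnP.
Qed.

End Types.

Lemma sorted_mkseq_ltn (f : nat -> nat) M :
  (forall l, l.+1 < M -> f l < f l.+1) -> sorted ltn (mkseq f M).
Proof.
move=> f_incr; apply/(sortedP 0) => l; rewrite size_mkseq => lM.
by rewrite !nth_mkseq ?(ltnW lM) //; apply: f_incr.
Qed.

Section Stable.
Variables (L : signature) (U : structure L) (n m : nat) (phi : formula L).
Hypothesis U_sat : aleph1_saturated U.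
Hypothesis U_stable : stable_in U.
Hypothesis phi_bound : fbound (n + m) phi.

Lemma not_all_half_graphs : ~ (forall k, half_graph U n m phi k).
Proof. by move=> /(order_property_of_half_graphs phi_bound U_sat); apply: U_stable. Qed.

Lemma stable_subseq_bounded_nchanges (a : nat -> 'I_n -> U) :
  exists (j : nat -> nat) (N : nat), (forall i, j i < j i.+1) /\
    forall (y : 'I_m -> U) k, nchanges (fun i => holdsb phi (a (j i)) y) k <= N.
Proof.
have [k0 no_hg] : exists k0, ~ half_graph U n m phi k0.
  by apply/existsNP; exact: not_all_half_graphs.
pose alternating (s : seq nat) :=
  `[< exists y : 'I_m -> U, forall l, l < size s -> holdsb phi (a (nth 0 s l)) y = odd l >].
have unbT : unbounded setT by move=> N; exists N.
have [H [unbH _ [col hom]]] := ramsey (2 * k0) alternating unbT.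
have [j [j_incr Hj]] := unbounded_enum unbH.
have col_tuple p : (forall l, l.+1 < 2 * k0 -> p l < p l.+1) ->
    alternating (mkseq (fun l => j (p l)) (2 * k0)) = col.
  move=> p_incr; apply: hom; first by rewrite size_mkseq.
    by apply: sorted_mkseq_ltn => l /p_incr; rewrite (incr_ltn_mono j_incr).
  by move=> _ /mapP[l _ ->]; apply: Hj.
case: col in hom col_tuple *.
  exfalso; apply/no_hg/(half_graph_of_alternation (a := fun i => a (j i))) => s _.
  have skip_incr l : l.+1 < 2 * k0 ->
      (if l < 2 * s then l else l.+1) < (if l.+1 < 2 * s then l.+1 else l.+2).
    by move=> _; case: (ltnP l (2 * s)); case: (ltnP l.+1 (2 * s)); lia.
  have /asboolP[y hy] := col_tuple _ skip_incr.
  by exists y => l lk; move: (hy l); rewrite size_mkseq nth_mkseq //; apply.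
exists j, (2 * k0); split=> // y k; rewrite leqNgt; apply/negP => lt_k.
have k_gt0 : 0 < k by case: k lt_k => //; rewrite /nchanges big_geq.
have [p [p_incr p_alt]] := nchanges_alternating k_gt0 (ltnW lt_k).
suff: alternating (mkseq (fun l => j (p l)) (2 * k0)) by rewrite col_tuple.
by apply/asboolP; exists y => l; rewrite size_mkseq => lk; rewrite nth_mkseq //; apply: p_alt.
Qed.

Lemma stable_limit_continuous (a : nat -> 'I_n -> U) (f : {ptws nat -> bool} -> bool) :
  (forall q, phi_types m phi a q -> q @ \oo --> f q) ->
  {within phi_types m phi a, continuous f}.
Proof.
move=> conv; apply/continuous_within_boolP => q aq; apply: contrapT => not_loc.
have [K0 qK0] := (cvg_seq_boolP _ _).1 (conv q aq).
have [I [Q [I_incr aQ QI]]] := staircase qK0 (discontinuity_far_flip conv not_loc).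
exact: not_all_half_graphs (half_graph_of_staircase I_incr aQ QI).
Qed.

End Stable.

Theorem corollary2p15 (L : signature) (T : theory L) (U : structure L) :
  complete_theory T -> is_model U T -> aleph1_saturated U ->
  (stable_in U <->
   ((forall (n m : nat) (phi : formula L) (a : nat -> 'I_n -> U),
       fbound (n + m) phi ->
       exists (j : nat -> nat) (N : nat),
         (forall i, (j i < j i.+1)%N) /\
         (exists f : {ptws nat -> bool} -> bool,
            forall q, phi_types m phi a q ->
              (fun i => q (j i)) @ \oo --> f q) /\
         (forall (b : 'I_m -> U) (k : nat),
            (\sum_(1 <= i < k)
               `|tv phi (a (j i)) b - tv phi (a (j i.+1)) b|%N <= N)%N))
    /\
    (forall (n m : nat) (phi : formula L) (a : nat -> 'I_n -> U)
            (f : {ptws nat -> bool} -> bool),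
       fbound (n + m) phi ->
       (forall q, phi_types m phi a q -> (fun i => q i) @ \oo --> f q) ->
       (exists N : nat, forall (b : 'I_m -> U) (k : nat),
            (\sum_(1 <= i < k)
               `|tv phi (a i) b - tv phi (a i.+1) b|%N <= N)%N) ->
       {within phi_types m phi a, continuous f}))).
Proof.
move=> _ _ U_sat; split=> [U_stable|[bounded_subseq limit_cont]]; first split.
- move=> n m phi a phi_bound.
  have [j [N [j_incr bnd]]] := stable_subseq_bounded_nchanges U_sat U_stable phi_bound a.
  exists j, N; split=> //; split=> [|y k]; last by rewrite sum_tv_dist.
  exists (fun q => eventually_true (fun i => q (j i))) => q aq.
  exact: cvg_phi_types_eventually_true bnd _ (phi_types_subseq j_incr aq).
- by move=> n m phi a f phi_bound conv _; apply: stable_limit_continuous.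
move=> n m phi phi_bound [a [b ab]].
have [j [N [j_incr [_ bnd]]]] := bounded_subseq n m phi a phi_bound.
have ab' i i' : holds phi (a (j i)) (b (j i')) <-> i < i' by rewrite ab incr_ltn_mono.
have bnd' (y : 'I_m -> U) k : nchanges (fun i => holdsb phi (a (j i)) y) k <= N.
  by rewrite -(sum_tv_dist phi (fun i => a (j i))); apply: bnd.
apply: (eventually_true_discontinuous ab').
by apply: limit_cont phi_bound (cvg_phi_types_eventually_true bnd') _; exists N.
Qed.
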